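(* Each of the eleven sets $A,B,C,D,E,F,G,H,I,J,K$ is uncountable.
   Context: $\Sigma=\{0,1\}$. An overlap is a word $axaxa$ with $a\in\Sigma$, $x\in\Sigma^*$; a word is overlap-free if it has no overlap as a factor. $\mathcal{O}$ is the set of right-infinite binary overlap-free words. Subsets of $\Sigma^\omega$: $A=\mathcal{O}$; $B=\{\mathbf{x}: 1\mathbf{x}\in\mathcal{O}\}$; $C=\{\mathbf{x}: 1\mathbf{x}\in\mathcal{O}$ and $\mathbf{x}$ begins with $101\}$; $D=\{\mathbf{x}: 0\mathbf{x}\in\mathcal{O}\}$; $E=\{\mathbf{x}: 0\mathbf{x}\in\mathcal{O}$ and $\mathbf{x}$ begins with $010\}$; $F=\{\mathbf{x}: 0\mathbf{x}\in\mathcal{O}$ and $\mathbf{x}$ begins with $11\}$; $G=\{\mathbf{x}: 0\mathbf{x}\in\mathcal{O}$ and $\mathbf{x}$ begins with $1\}$; $H=\{\mathbf{x}: 1\mathbf{x}\in\mathcal{O}$ and $\mathbf{x}$ begins with $1\}$; $I=\{\mathbf{x}: 1\mathbf{x}\in\mathcal{O}$ and $\mathbf{x}$ begins with $00\}$; $J=\{\mathbf{x}: 1\mathbf{x}\in\mathcal{O}$ and $\mathbf{x}$ begins with $0\}$; $K=\{\mathbf{x}: 0\mathbf{x}\in\mathcal{O}$ and $\mathbf{x}$ begins with $0\}$. *)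

From mathcomp Require Import all_boot.
Set Implicit Arguments. Unset Strict Implicit. Unset Printing Implicit Defensive.

(* Alphabet Sigma = {0,1} is encoded by bool: 0 = false, 1 = true. *)
Definition iword := nat -> bool.

Definition scons (a : bool) (x : iword) : iword :=
  fun n => if n is n'.+1 then x n' else a.

Definition overlap (u : seq bool) : Prop :=
  exists (a : bool) (x : seq bool), u = a :: x ++ a :: x ++ [:: a].

Definition ifactor (w : iword) (i n : nat) : seq bool := mkseq (fun k => w (i + k)) n.

Definition overlap_free (w : iword) : Prop :=
  forall i n, ~ overlap (ifactor w i n).

Definition begins_with (p : seq bool) (x : iword) : Prop :=
  forall k, k < size p -> x k = nth false p k.

Definition ofw_setO (x : iword) : Prop := overlap_free x.

Definition ofw_setA (x : iword) : Prop := ofw_setO x.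
Definition ofw_setB (x : iword) : Prop := ofw_setO (scons true x).
Definition ofw_setC (x : iword) : Prop := ofw_setO (scons true x) /\ begins_with [:: true; false; true] x.
Definition ofw_setD (x : iword) : Prop := ofw_setO (scons false x).
Definition ofw_setE (x : iword) : Prop := ofw_setO (scons false x) /\ begins_with [:: false; true; false] x.
Definition ofw_setF (x : iword) : Prop := ofw_setO (scons false x) /\ begins_with [:: true; true] x.
Definition ofw_setG (x : iword) : Prop := ofw_setO (scons false x) /\ begins_with [:: true] x.
Definition ofw_setH (x : iword) : Prop := ofw_setO (scons true x) /\ begins_with [:: true] x.
Definition ofw_setI (x : iword) : Prop := ofw_setO (scons true x) /\ begins_with [:: false; false] x.
Definition ofw_setJ (x : iword) : Prop := ofw_setO (scons true x) /\ begins_with [:: false] x.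
Definition ofw_setK (x : iword) : Prop := ofw_setO (scons false x) /\ begins_with [:: false] x.

Definition countable_set (S : iword -> Prop) : Prop :=
  exists f : iword -> nat, forall x y, S x -> S y -> f x = f y -> x = y.

Definition uncountable (S : iword -> Prop) : Prop := ~ countable_set S.

From mathcomp Require Import all_boot zify.
From Stdlib Require Import ClassicalEpsilon.
Set Implicit Arguments. Unset Strict Implicit. Unset Printing Implicit Defensive.

(* The Thue--Morse morphism [mu] cannot produce an overlap
   of odd period, and an overlap of period 2q in [mu x] comes from an overlap
   of period q in x.  Hence [g 0 = mu^3] and [g 1 = mu^3] minus its first three
   letters strictly shrink overlaps, and for every bit sequence s the limit
   [W s] of [g (s 0) (g (s 1) (... zeros))] is overlap-free: an overlap of
   period p in it would already sit in a composition of more than p maps.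
   As [g b] is injective and writes ~b at position 2, s |-> W s is injective,
   so the overlap-free words [W s] form an uncountable set by Cantor's
   diagonal argument.  Suffixes of [mu^4 (W s)] from a fixed position below
   16 begin with a fixed factor of the Thue--Morse word; this gives the sets
   C, E, F, H, I, K, and the other sets contain one of these or, for A, the
   words 1x with x in B. *)

(* [w] has the overlap [a x a x a] with [|a x| = p] at position [i]. *)
Definition overlap_at (w : iword) (i p : nat) : Prop :=
  0 < p /\ forall k, k <= p -> w (i + k) = w (i + k + p).

Lemma overlap_at_of_overlap w i n :
  overlap (ifactor w i n) -> exists p, overlap_at w i p.
Proof.
move=> [a [x def_u]]; set v := a :: x.
have size_n : n = (size v).*2.+1.
  rewrite -(size_mkseq (fun k => w (i + k)) n) -/(ifactor w i n) def_u /=.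
  by rewrite !size_cat /= size_cat /=; lia.
exists (size v); split=> // k le_k_v.
have nth_w j : j < n -> w (i + j) = nth false (v ++ v ++ [:: a]) j.
  move=> lt_j_n; rewrite -(nth_mkseq false (fun k => w (i + k)) lt_j_n).
  by rewrite -/(ifactor w i n) def_u.
rewrite -addnA !nth_w ?size_n; try lia.
rewrite [RHS]nth_cat ltnNge leq_addl addnK [in LHS]nth_cat.
have [lt_k_v | ->] : k < size v \/ k = size v by lia.
  by rewrite lt_k_v nth_cat lt_k_v.
by rewrite ltnn subnn [RHS]nth_cat ltnn subnn.
Qed.

Lemma overlap_free_no_overlap_at w :
  (forall i p, ~ overlap_at w i p) -> overlap_free w.
Proof. by move=> no_ov i n /overlap_at_of_overlap [p /no_ov]. Qed.

Definition eq_below (N : nat) (x y : iword) : Prop := forall n, n < N -> x n = y n.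

Lemma eq_below_overlap_at x y i p :
  eq_below (i + p.*2).+1 x y -> overlap_at x i p -> overlap_at y i p.
Proof.
move=> eq_xy [p_gt0 per_x]; split=> // k le_k_p.
by rewrite -!eq_xy ?per_x //; lia.
Qed.

Definition shift (d : nat) (w : iword) : iword := fun n => w (n + d).

Lemma overlap_at_shift d w i p : overlap_at (shift d w) i p -> overlap_at w (i + d) p.
Proof.
move=> [p_gt0 per_w]; split=> // k /per_w.
by rewrite /shift -!addnA !(addnC d) -!addnA.
Qed.

(* The Thue--Morse morphism 0 -> 01, 1 -> 10. *)
Definition mu (x : iword) : iword := fun n => x n./2 (+) odd n.

Lemma mu_add_double x i k : mu x (i + k.*2) = x (i./2 + k) (+) odd i.
Proof. by rewrite /mu halfD doubleK oddD odd_double andbF add0n addbF. Qed.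

Lemma mu_succ_even x n : ~~ odd n -> mu x n.+1 = ~~ mu x n.
Proof. by move=> /negbTE e_n; rewrite /mu /= uphalf_half e_n add0n addbT addbF. Qed.

Lemma overlap_at_mu_even x i p : overlap_at (mu x) i p -> ~~ odd p.
Proof.
move=> [_ per]; apply/negP=> odd_p.
suff alternate k : k <= p -> mu x (i + k) = mu x i (+) odd k.
  have := alternate p (leqnn p); have := per 0 isT.
  by rewrite !addn0 odd_p => <-; case: (mu x i).
elim: k => [|k IHk] lt_k_p; first by rewrite addn0 addbF.
have le_k_p := ltnW lt_k_p.
suff -> : mu x (i + k.+1) = ~~ mu x (i + k) by rewrite IHk // oddS addbN.
have [o_ik | e_ik] := boolP (odd (i + k)); last by rewrite addnS mu_succ_even.
rewrite per // per // addnS addSn mu_succ_even //.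
by rewrite oddD o_ik odd_p.
Qed.

Lemma overlap_at_mu x i p : overlap_at (mu x) i p -> overlap_at x i./2 p./2.
Proof.
move=> ov; have /negbTE even_p := overlap_at_mu_even ov.
have {even_p}[q def_p] : exists q, p = q.*2.
  by exists p./2; rewrite -[in LHS](odd_double_half p) even_p.
move: ov; rewrite def_p doubleK => -[q2_gt0 per]; split=> [|k le_k_q]; first by lia.
have := per k.*2 ltac:(lia).
by rewrite -addnA -doubleD !mu_add_double addnA => /addIb.
Qed.

Lemma overlap_at_iter_mu k x i p :
  overlap_at (iter k mu x) i p -> exists j q, q + k <= p /\ overlap_at x j q.
Proof.
elim: k i p => [|k IHk] i p; first by exists i, p; rewrite addn0.
move=> ov; have [p_gt0 _] := ov.
have [j [q [le_qk ov_x]]] := IHk _ _ (overlap_at_mu ov).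
by exists j, q; split=> //; lia.
Qed.

Lemma mu_double x n : mu x n.*2 = x n.
Proof. by rewrite /mu doubleK odd_double addbF. Qed.

Lemma iter_mu_mul_expn k x m : iter k mu x (m * 2 ^ k) = x m.
Proof. by elim: k => [|k IHk]; rewrite ?muln1 // expnS mulnCA mul2n /= mu_double. Qed.

Lemma mu_eq_below N x y : eq_below N x y -> eq_below N.*2 (mu x) (mu y).
Proof. by move=> eq_xy n lt_n; rewrite /mu eq_xy // ltn_half_double. Qed.

Lemma iter_mu_eq_below k N x y :
  eq_below N x y -> eq_below (N * 2 ^ k) (iter k mu x) (iter k mu y).
Proof.
move=> eq_xy; elim: k => [|k IHk]; first by rewrite muln1.
by rewrite expnS mulnCA mul2n; apply: mu_eq_below.
Qed.

(* [mu^3] maps a letter [c] to [c ~c ~c c ~c c c ~c]; [g true] drops its first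
   three letters, so [g b x] starts with [x 0] and has [~~ b] at position 2
   when [x 0 = false]. *)
Definition g (b : bool) (x : iword) : iword := shift (3 * b) (iter 3 mu x).

Lemma overlap_at_g b x i p :
  overlap_at (g b x) i p -> exists j q, q < p /\ overlap_at x j q.
Proof.
move/overlap_at_shift/overlap_at_iter_mu => [j [q [le_q_p ov]]].
by exists j, q; split=> //; lia.
Qed.

Lemma g_head b x : g b x 0 = x 0.
Proof. by case: b; rewrite /g /shift /mu /=; case: (x 0). Qed.

Lemma g_bit b x : x 0 = false -> g b x 2 = ~~ b.
Proof. by case: b; rewrite /g /shift /mu /= => ->. Qed.

Lemma g_eq_below b N x y : eq_below N.+1 x y -> eq_below N.+2 (g b x) (g b y).
Proof. by move=> /(@iter_mu_eq_below 3) eq_xy n lt_n; apply: eq_xy; case: b; lia. Qed.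

Lemma g_inj b x y : x 0 = y 0 -> g b x =1 g b y -> x =1 y.
Proof.
move=> eq0 eq_g [|m] //; have := eq_g (m.+1 * 2 ^ 3 - 3 * b).
by rewrite /g /shift subnK ?iter_mu_mul_expn //; case: (b) => /=; lia.
Qed.

Fixpoint gcomp (s : nat -> bool) (K : nat) (z : iword) : iword :=
  if K is K'.+1 then g (s 0) (gcomp (fun n => s n.+1) K' z) else z.

Lemma overlap_at_gcomp K s z i p :
  overlap_at (gcomp s K z) i p -> exists j q, q + K <= p /\ overlap_at z j q.
Proof.
elim: K s i p => [|K IHK] s i p /=; first by exists i, p; rewrite addn0.
move=> /overlap_at_g [j [q [lt_q_p /IHK [j' [q' [le_q' ov]]]]]].
by exists j', q'; split=> //; lia.
Qed.

Lemma gcomp_head s K z : gcomp s K z 0 = z 0.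
Proof. by elim: K s => [|K IHK] s //=; rewrite g_head IHK. Qed.

Lemma gcomp_eq_below K L s z z' :
  z 0 = z' 0 -> eq_below K.+1 (gcomp s K z) (gcomp s (K + L) z').
Proof.
move=> eq0; elim: K s => [|K IHK] s /=; last exact/g_eq_below/IHK.
by move=> [|] // _; rewrite gcomp_head.
Qed.

Definition zeros : iword := fun _ => false.

(* The limit of [g (s 0) \o ... \o g (s K.-1)] applied to [zeros]: letter [n]
   no longer changes once [n < K]. *)
Definition W (s : nat -> bool) : iword := fun n => gcomp s n.+1 zeros n.

Lemma W_gcomp s K n : n < K -> W s n = gcomp s K zeros n.
Proof. by move=> lt_n_K; rewrite /W -(subnKC lt_n_K); apply: gcomp_eq_below. Qed.

Lemma W_head s : W s 0 = false.
Proof. exact: gcomp_head. Qed.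

Lemma W_g s : W s =1 g (s 0) (W (fun n => s n.+1)).
Proof.
move=> n; rewrite (@W_gcomp s n.+2) //=; apply: g_eq_below => // m lt_m.
by rewrite (@W_gcomp _ n.+1).
Qed.

Lemma W_no_overlap_at s i p : ~ overlap_at (W s) i p.
Proof.
move=> ov.
have /overlap_at_gcomp [j [q [le_p _]]] : overlap_at (gcomp s (i + p.*2).+1 zeros) i p.
  by apply: eq_below_overlap_at ov => n; apply: W_gcomp.
by lia.
Qed.

Lemma W_inj s s' : W s =1 W s' -> s =1 s'.
Proof.
have head_eq t t' : W t =1 W t' -> t 0 = t' 0.
  move=> eq_W; have := eq_W 2; rewrite !W_g !g_bit ?W_head //.
  by case: (t 0); case: (t' 0).
move=> eq_W k; elim: k s s' eq_W => [|k IHk] s s' eq_W; first exact: head_eq.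
apply: (IHk (fun n => s n.+1) (fun n => s' n.+1)).
apply: (@g_inj (s 0)); first by rewrite !W_head.
by move=> n; rewrite -W_g (head_eq _ _ eq_W) -W_g.
Qed.

Lemma uncountable_of_cantor_inj (S : iword -> Prop) (E : (nat -> bool) -> iword) :
  (forall s, S (E s)) -> (forall s s', E s = E s' -> s =1 s') -> uncountable S.
Proof.
move=> S_E inj_E [f inj_f].
have inh := inhabits (fun _ : nat => false).
pose code s := f (E s).
pose decode k := epsilon inh (fun s => code s = k).
pose diag k := ~~ decode k k.
have code_decode : code (decode (code diag)) = code diag.
  by apply: (epsilon_spec inh (fun s => code s = code diag)); exists diag.
have := inj_E _ _ (inj_f _ _ (S_E _) (S_E _) code_decode) (code diag).
by rewrite /diag; case: (decode _ _).
Qed.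

Lemma uncountable_subset (S T : iword -> Prop) :
  uncountable S -> (forall x, S x -> T x) -> uncountable T.
Proof.
move=> unc_S sub_ST [f inj_f]; apply: unc_S.
by exists f => x y /sub_ST Tx /sub_ST; apply: inj_f.
Qed.

Lemma uncountable_scons a (S : iword -> Prop) :
  uncountable (fun x => S (scons a x)) -> uncountable S.
Proof.
move=> unc [f inj_f]; apply: unc; exists (fun x => f (scons a x)) => x y Sx Sy eq_f.
exact: (congr1 (fun w n => w n.+1) (inj_f _ _ Sx Sy eq_f)).
Qed.

(* [iter 4 mu zeros] starts with the Thue--Morse prefix 0110100110010110,
   which is also the prefix of every [iter 4 mu (W s)]. *)
Lemma uncountable_prefixed a p i :
  i + (size p).+1 <= 16 -> ifactor (iter 4 mu zeros) i (size p).+1 = a :: p ->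
  uncountable (fun x => ofw_setO (scons a x) /\ begins_with p x).
Proof.
move=> le_16 def_ap; pose w s := iter 4 mu (W s).
have w_prefix s k : k <= size p -> w s (i + k) = nth false (a :: p) k.
  move=> le_k; rewrite -def_ap nth_mkseq //; apply: (@iter_mu_eq_below 4 1); last by lia.
  by move=> [|] // _; apply: W_head.
apply: (@uncountable_of_cantor_inj _ (fun s => shift i.+1 (w s))) => [s | s s' eq_w].
- split=> [|k lt_k]; last by rewrite /shift -addSnnS addnC w_prefix.
  apply: overlap_free_no_overlap_at => j q ov.
  have ov_w : overlap_at (shift i (w s)) j q.
    apply: eq_below_overlap_at ov => -[|n] _ /=; first by rewrite /shift -[i]addn0 w_prefix.
    by rewrite /shift addSnnS.
  by have /overlap_at_shift/overlap_at_iter_mu [j' [q' [_ /W_no_overlap_at]]] := ov_w.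
- apply: W_inj => -[|m]; first by rewrite !W_head.
  have := congr1 (fun x => x (m.+1 * 2 ^ 4 - i.+1)) eq_w.
  by rewrite /shift subnK /w ?iter_mu_mul_expn //; lia.
Qed.

Lemma begins_with_catl p q x : begins_with (p ++ q) x -> begins_with p x.
Proof.
move=> pre_x k lt_k; rewrite pre_x ?nth_cat ?lt_k // size_cat.
exact: leq_trans lt_k (leq_addr _ _).
Qed.

Theorem corollary4 :
  uncountable ofw_setA /\ uncountable ofw_setB /\ uncountable ofw_setC /\ uncountable ofw_setD /\
  uncountable ofw_setE /\ uncountable ofw_setF /\ uncountable ofw_setG /\ uncountable ofw_setH /\
  uncountable ofw_setI /\ uncountable ofw_setJ /\ uncountable ofw_setK.
Proof.
have unc_C : uncountable ofw_setC by exact: (@uncountable_prefixed true _ 1).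
have unc_E : uncountable ofw_setE by exact: (@uncountable_prefixed false _ 9).
have unc_F : uncountable ofw_setF by exact: (@uncountable_prefixed false _ 0).
have unc_H : uncountable ofw_setH by exact: (@uncountable_prefixed true _ 1).
have unc_I : uncountable ofw_setI by exact: (@uncountable_prefixed true _ 4).
have unc_K : uncountable ofw_setK by exact: (@uncountable_prefixed false _ 5).
have unc_B : uncountable ofw_setB.
  by apply: (uncountable_subset (T := ofw_setB) unc_C) => x [].
have unc_D : uncountable ofw_setD.
  by apply: (uncountable_subset (T := ofw_setD) unc_E) => x [].
have unc_G : uncountable ofw_setG.
  apply: (uncountable_subset (T := ofw_setG) unc_F) => x [O_x].
  by move/(@begins_with_catl [:: true]).
have unc_J : uncountable ofw_setJ.
  apply: (uncountable_subset (T := ofw_setJ) unc_I) => x [O_x].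
  by move/(@begins_with_catl [:: false]).
have unc_A : uncountable ofw_setA by exact: uncountable_scons unc_B.
by do !split.
Qed.
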